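(* For $\epsilon>0$ and $\Delta\in\mathbb{R}$ let $\mathrm{LB}(\alpha,\epsilon,\Delta):=\alpha\Delta+\alpha\int_{\alpha}^{1}\frac{1-t}{t(1-t)+\epsilon}\,dt+(1-\alpha)\int_{0}^{\alpha}\frac{t}{t(1-t)+\epsilon}\,dt$ for $\alpha\in[0,1]$. Then $$\frac{\partial\,\mathrm{LB}(\alpha,\epsilon,\Delta)}{\partial\alpha}=\Delta+\frac{1}{\sqrt{1+4\epsilon}}\log\left|\frac{\alpha-\frac{1+\sqrt{1+4\epsilon}}{2}}{\alpha-\frac{1-\sqrt{1+4\epsilon}}{2}}\right|,\qquad \frac{\partial^{2}\,\mathrm{LB}(\alpha,\epsilon,\Delta)}{\partial\alpha^{2}}=-\frac{1}{\alpha(1-\alpha)+\epsilon},$$ and consequently $\alpha\mapsto\mathrm{LB}(\alpha,\epsilon,\Delta)$ is strictly concave on $[0,1]$. *)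

From Stdlib Require Import Reals Lra.
From Coquelicot Require Import Coquelicot.
Open Scope R_scope.

Definition LB (alpha eps Delta : R) : R :=
  alpha * Delta
  + alpha * RInt (fun t => (1 - t) / (t * (1 - t) + eps)) alpha 1
  + (1 - alpha) * RInt (fun t => t / (t * (1 - t) + eps)) 0 alpha.

(** The denominator factors as [t (1 - t) + eps = (r₊ - t) (t - r₋)], where
    [r₋ < 0 < 1 < r₊] are the roots [(1 ± sqrt (1 + 4 eps)) / 2]; everything happens
    on [(r₋, r₊)], where it is positive.  By the fundamental theorem of calculus
    [LB' = Delta + Phi] with [Phi a = ∫_a^1 f - ∫_0^a g], and [Phi' = -1 / (a (1 - a) + eps)].
    The logarithm [ln ((r₊ - a) / (a - r₋)) / sqrt (1 + 4 eps)] has the same derivative,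
    and both vanish at [a = 1/2], where the substitution [t ↦ 1 - t] exchanges the two
    integrands; hence they coincide.  Strict concavity follows from the mean value
    theorem, [Phi] being strictly decreasing. *)
From Stdlib Require Import Reals Lra.
From Coquelicot Require Import Coquelicot.
Open Scope R_scope.

Lemma is_derive_eq (K : R -> R) (x l l' : R) : is_derive K x l -> l = l' -> is_derive K x l'.
Proof. intros HK <-. exact HK. Qed.

Section OpenInterval.
Variables lo hi : R.

Lemma mean_value_open (K dK : R -> R) x y :
  (forall c, lo < c < hi -> is_derive K c (dK c)) -> lo < x -> x < y -> y < hi ->
  exists c, x < c < y /\ K y - K x = dK c * (y - x).
Proof.
  intros HK Hx Hxy Hy.
  destruct (MVT_cor2 K dK x y Hxy) as [c [Hc Hcxy]].
  { intros c Hc. apply is_derive_Reals, HK. lra. }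
  exists c. split; assumption.
Qed.

Lemma eq_of_is_derive_0 (K : R -> R) x y :
  (forall c, lo < c < hi -> is_derive K c 0) -> lo < x < hi -> lo < y < hi -> K x = K y.
Proof.
  intros HK Hx Hy.
  destruct (Rtotal_order x y) as [Hxy | [-> | Hyx]]; [| reflexivity |].
  - destruct (mean_value_open K (fun _ => 0) x y) as [c [_ Hc]]; auto; lra.
  - destruct (mean_value_open K (fun _ => 0) y x) as [c [_ Hc]]; auto; lra.
Qed.

Lemma decr_of_is_derive_neg (K dK : R -> R) :
  (forall c, lo < c < hi -> is_derive K c (dK c)) -> (forall c, lo < c < hi -> dK c < 0) ->
  forall x y, lo < x -> x < y -> y < hi -> K y < K x.
Proof.
  intros HK Hneg x y Hx Hxy Hy.
  destruct (mean_value_open K dK x y) as [c [Hc HKc]]; auto.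
  assert (Hdc := Hneg c ltac:(lra)).
  assert (dK c * (y - x) < 0) by (apply Rmult_neg_pos; lra).
  lra.
Qed.

Section DecreasingDerivative.
Variables K dK : R -> R.
Hypothesis K_derive : forall c, lo < c < hi -> is_derive K c (dK c).
Hypothesis dK_decr : forall u v, lo < u -> u < v -> v < hi -> dK v < dK u.

Lemma strict_concave_lt x y t : lo < x -> x < y -> y < hi -> 0 < t < 1 ->
  t * K x + (1 - t) * K y < K (t * x + (1 - t) * y).
Proof.
  intros Hx Hxy Hy Ht. set (z := t * x + (1 - t) * y).
  assert (Hxz : x < z) by (unfold z; nra).
  assert (Hzy : z < y) by (unfold z; nra).
  destruct (mean_value_open K dK x z) as [c1 [Hc1 HK1]]; auto; try lra.
  destruct (mean_value_open K dK z y) as [c2 [Hc2 HK2]]; auto; try lra.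
  assert (Hd := dK_decr c1 c2 ltac:(lra) ltac:(lra) ltac:(lra)).
  replace (z - x) with ((1 - t) * (y - x)) in HK1 by (unfold z; ring).
  replace (y - z) with (t * (y - x)) in HK2 by (unfold z; ring).
  assert (Hw : 0 < t * (1 - t) * (y - x)).
  { apply Rmult_lt_0_compat; [apply Rmult_lt_0_compat |]; lra. }
  assert (0 < t * (1 - t) * (y - x) * (dK c1 - dK c2)) by (apply Rmult_lt_0_compat; lra).
  nra.
Qed.

Lemma strict_concave_of_derive_decr x y t :
  lo < x < hi -> lo < y < hi -> x <> y -> 0 < t < 1 ->
  t * K x + (1 - t) * K y < K (t * x + (1 - t) * y).
Proof.
  intros Hx Hy Hxy Ht.
  destruct (Rtotal_order x y) as [Hlt | [Heq | Hgt]]; [| contradiction |].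
  - apply strict_concave_lt; lra.
  - replace (t * x + (1 - t) * y) with ((1 - t) * y + (1 - (1 - t)) * x) by ring.
    assert (H := strict_concave_lt y x (1 - t) ltac:(lra) Hgt ltac:(lra) ltac:(lra)).
    lra.
Qed.

End DecreasingDerivative.
End OpenInterval.

Section LowerBound.
Variable eps : R.
Hypothesis eps_gt0 : 0 < eps.

Let s := sqrt (1 + 4 * eps).
Let root_hi := (1 + s) / 2.
Let root_lo := (1 - s) / 2.
Let f t := (1 - t) / (t * (1 - t) + eps).
Let g t := t / (t * (1 - t) + eps).

Lemma one_lt_s : 1 < s.
Proof.
  unfold s. rewrite <- sqrt_1 at 1. apply sqrt_lt_1_alt. lra.
Qed.

Lemma denom_factor t : t * (1 - t) + eps = (root_hi - t) * (t - root_lo).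
Proof.
  assert (Hs : s * s = 1 + 4 * eps) by (apply sqrt_sqrt; lra).
  unfold root_hi, root_lo. nra.
Qed.

Lemma denom_pos t : root_lo < t < root_hi -> 0 < t * (1 - t) + eps.
Proof.
  intros Ht. rewrite denom_factor. apply Rmult_lt_0_compat; lra.
Qed.

Lemma unit_interval_in_roots a : 0 <= a <= 1 -> root_lo < a < root_hi.
Proof.
  assert (H := one_lt_s). unfold root_lo, root_hi. lra.
Qed.

Lemma segment_in_roots a b z : root_lo < a < root_hi -> root_lo < b < root_hi ->
  Rmin a b <= z <= Rmax a b -> root_lo < z < root_hi.
Proof.
  intros Ha Hb Hz. unfold Rmin, Rmax in Hz. destruct (Rle_dec a b); lra.
Qed.

Lemma continuous_f z : root_lo < z < root_hi -> continuous f z.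
Proof.
  intros Hz. apply (@ex_derive_continuous R_AbsRing R_NormedModule).
  unfold f. auto_derive. assert (H := denom_pos z Hz). lra.
Qed.

Lemma continuous_g z : root_lo < z < root_hi -> continuous g z.
Proof.
  intros Hz. apply (@ex_derive_continuous R_AbsRing R_NormedModule).
  unfold g. auto_derive. assert (H := denom_pos z Hz). lra.
Qed.

Lemma ex_RInt_f a b : root_lo < a < root_hi -> root_lo < b < root_hi -> ex_RInt f a b.
Proof.
  intros Ha Hb. apply (@ex_RInt_continuous R_CompleteNormedModule).
  intros z Hz. apply continuous_f, (segment_in_roots a b); assumption.
Qed.

Lemma ex_RInt_g a b : root_lo < a < root_hi -> root_lo < b < root_hi -> ex_RInt g a b.
Proof.
  intros Ha Hb. apply (@ex_RInt_continuous R_CompleteNormedModule).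
  intros z Hz. apply continuous_g, (segment_in_roots a b); assumption.
Qed.

Lemma locally_in_roots a (P : R -> Prop) : root_lo < a < root_hi ->
  (forall y, root_lo < y < root_hi -> P y) -> locally a P.
Proof.
  intros Ha HP. apply (locally_interval _ _ (Finite root_lo) (Finite root_hi)); simpl; try lra.
  intros y Hlo Hhi. apply HP. lra.
Qed.

Lemma is_derive_RInt_f a : root_lo < a < root_hi -> is_derive (fun a => RInt f a 1) a (- f a).
Proof.
  intros Ha. apply (is_derive_RInt' f (fun a => RInt f a 1) a 1).
  - apply locally_in_roots; [exact Ha |]. intros y Hy.
    apply (@RInt_correct R_CompleteNormedModule), ex_RInt_f, unit_interval_in_roots; lra.
  - apply continuous_f, Ha.
Qed.

Lemma is_derive_RInt_g a : root_lo < a < root_hi -> is_derive (fun a => RInt g 0 a) a (g a).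
Proof.
  intros Ha. apply (is_derive_RInt g (fun a => RInt g 0 a) 0 a).
  - apply locally_in_roots; [exact Ha |]. intros y Hy.
    apply (@RInt_correct R_CompleteNormedModule), ex_RInt_g; [apply unit_interval_in_roots; lra | exact Hy].
  - apply continuous_g, Ha.
Qed.

Let Phi a := RInt f a 1 - RInt g 0 a.

Lemma is_derive_LB Delta a : root_lo < a < root_hi ->
  is_derive (fun a => LB a eps Delta) a (Delta + Phi a).
Proof.
  intros Ha. unfold LB. eapply is_derive_eq.
  - apply (is_derive_plus (fun a => a * Delta + a * RInt f a 1) (fun a => (1 - a) * RInt g 0 a)).
    + apply (is_derive_plus (fun a => a * Delta) (fun a => a * RInt f a 1)).
      * apply (is_derive_mult (fun a => a) (fun _ => Delta));
          [apply is_derive_id | apply is_derive_const | apply Rmult_comm].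
      * apply (is_derive_mult (fun a => a) (fun a => RInt f a 1));
          [apply is_derive_id | apply is_derive_RInt_f, Ha | apply Rmult_comm].
    + apply (is_derive_mult (fun a => 1 - a) (fun a => RInt g 0 a));
        [| apply is_derive_RInt_g, Ha | apply Rmult_comm].
      apply (is_derive_minus (fun _ => 1) (fun a => a)); [apply is_derive_const | apply is_derive_id].
  - assert (HD := denom_pos a Ha). unfold Phi, f, g. cbn -[RInt]. field. lra.
Qed.

Lemma is_derive_Phi a : root_lo < a < root_hi -> is_derive Phi a (- / (a * (1 - a) + eps)).
Proof.
  intros Ha. unfold Phi. eapply is_derive_eq.
  - apply (is_derive_minus (fun a => RInt f a 1) (fun a => RInt g 0 a));
      [apply is_derive_RInt_f, Ha | apply is_derive_RInt_g, Ha].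
  - assert (HD := denom_pos a Ha). unfold f, g. cbn -[RInt]. field. lra.
Qed.

Lemma is_derive_log_ratio a : root_lo < a < root_hi ->
  is_derive (fun a => / s * ln ((root_hi - a) / (a - root_lo))) a (- / (a * (1 - a) + eps)).
Proof.
  intros Ha. assert (Hs := one_lt_s). auto_derive.
  - split; [lra | split; [| trivial]].
    apply Rmult_lt_0_compat; [lra | apply Rinv_0_lt_compat; lra].
  - rewrite denom_factor. unfold root_hi, root_lo in *. field. repeat split; lra.
Qed.

Lemma half_in_roots : root_lo < 1/2 < root_hi.
Proof. apply unit_interval_in_roots. lra. Qed.

Lemma g_reflect y : g (1 - y) = f y.
Proof.
  unfold f, g. replace ((1 - y) * (1 - (1 - y)) + eps) with (y * (1 - y) + eps) by ring.
  reflexivity.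
Qed.

Lemma RInt_f_half_eq_RInt_g_half : RInt f (1/2) 1 = RInt g 0 (1/2).
Proof.
  assert (Hf : ex_RInt f (1/2) 1).
  { apply ex_RInt_f; [apply half_in_roots | apply unit_interval_in_roots; lra]. }
  assert (Hg : ex_RInt g 0 (1/2)).
  { apply ex_RInt_g; [apply unit_interval_in_roots; lra | apply half_in_roots]. }
  assert (Hsubst := RInt_comp_lin g (-1) 1 (1/2) 1).
  replace (-1 * (1/2) + 1) with (1/2) in Hsubst by field.
  replace (-1 * 1 + 1) with 0 in Hsubst by ring.
  specialize (Hsubst (ex_RInt_swap _ _ _ Hg)).
  rewrite (RInt_ext _ (fun y => @opp R_CompleteNormedModule (f y))) in Hsubst.
  - rewrite (RInt_opp _ _ _ Hf), <- (opp_RInt_swap _ _ _ Hg) in Hsubst.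
    cbn -[RInt] in Hsubst. lra.
  - intros y _. replace (-1 * y + 1) with (1 - y) by ring. rewrite g_reflect.
    cbn. ring.
Qed.

Lemma Phi_eq_log a : root_lo < a < root_hi -> Phi a = / s * ln ((root_hi - a) / (a - root_lo)).
Proof.
  intros Ha.
  assert (Hconst := eq_of_is_derive_0 root_lo root_hi
    (fun a => Phi a - / s * ln ((root_hi - a) / (a - root_lo))) a (1/2)).
  cbv beta in Hconst.
  replace ((root_hi - 1/2) / (1/2 - root_lo)) with 1 in Hconst.
  2: { assert (Hs := one_lt_s). unfold root_hi, root_lo. field. lra. }
  assert (Phi_half : Phi (1/2) = 0).
  { unfold Phi. rewrite RInt_f_half_eq_RInt_g_half. ring. }
  rewrite Phi_half, ln_1 in Hconst.
  enough (Phi a - / s * ln ((root_hi - a) / (a - root_lo)) = 0) by lra.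
  rewrite Hconst; [ring | | exact Ha | exact half_in_roots].
  intros c Hc. eapply is_derive_eq.
  - apply (is_derive_minus Phi); [apply is_derive_Phi, Hc | apply is_derive_log_ratio, Hc].
  - cbn. ring.
Qed.

Lemma is_derive_LB_log Delta a : root_lo < a < root_hi ->
  is_derive (fun a => LB a eps Delta) a
    (Delta + / s * ln (Rabs ((a - root_hi) / (a - root_lo)))).
Proof.
  intros Ha. eapply is_derive_eq; [apply is_derive_LB, Ha |].
  rewrite (Phi_eq_log a Ha).
  replace ((a - root_hi) / (a - root_lo)) with (- ((root_hi - a) / (a - root_lo))) by (field; lra).
  rewrite Rabs_Ropp, Rabs_pos_eq; [reflexivity |].
  apply Rlt_le, Rdiv_lt_0_compat; lra.
Qed.

Lemma is_derive2_LB Delta a : root_lo < a < root_hi ->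
  is_derive_n (fun a => LB a eps Delta) 2 a (- / (a * (1 - a) + eps)).
Proof.
  intros Ha. apply (is_derive_ext_loc (fun a => Delta + Phi a)).
  - apply locally_in_roots; [exact Ha |]. intros y Hy.
    symmetry. apply is_derive_unique, is_derive_LB, Hy.
  - eapply is_derive_eq.
    + apply (is_derive_plus (fun _ => Delta) Phi); [apply is_derive_const | apply is_derive_Phi, Ha].
    + cbn. ring.
Qed.

Lemma Phi_decr u v : root_lo < u -> u < v -> v < root_hi -> Phi v < Phi u.
Proof.
  apply (decr_of_is_derive_neg root_lo root_hi Phi (fun a => - / (a * (1 - a) + eps))).
  - exact is_derive_Phi.
  - intros c Hc. apply Ropp_lt_gt_0_contravar, Rinv_0_lt_compat, denom_pos, Hc.
Qed.

Lemma LB_strict_concave Delta x y t :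
  root_lo < x < root_hi -> root_lo < y < root_hi -> x <> y -> 0 < t < 1 ->
  t * LB x eps Delta + (1 - t) * LB y eps Delta < LB (t * x + (1 - t) * y) eps Delta.
Proof.
  apply (strict_concave_of_derive_decr root_lo root_hi (fun a => LB a eps Delta) (fun a => Delta + Phi a)).
  - intros c Hc. apply is_derive_LB, Hc.
  - intros u v Hu Huv Hv. assert (H := Phi_decr u v Hu Huv Hv). lra.
Qed.

End LowerBound.

Theorem lemma4 (eps Delta : R) (heps : 0 < eps) :
  (forall alpha, 0 <= alpha <= 1 ->
     is_derive (fun a => LB a eps Delta) alpha
       (Delta + / sqrt (1 + 4 * eps) *
          ln (Rabs ((alpha - (1 + sqrt (1 + 4 * eps)) / 2) /
                    (alpha - (1 - sqrt (1 + 4 * eps)) / 2)))))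
  /\ (forall alpha, 0 <= alpha <= 1 ->
     is_derive_n (fun a => LB a eps Delta) 2 alpha
       (- / (alpha * (1 - alpha) + eps)))
  /\ (forall x y t, 0 <= x <= 1 -> 0 <= y <= 1 -> x <> y -> 0 < t < 1 ->
     t * LB x eps Delta + (1 - t) * LB y eps Delta
       < LB (t * x + (1 - t) * y) eps Delta).
Proof.
  split; [| split].
  - intros alpha Ha. apply is_derive_LB_log, unit_interval_in_roots; assumption.
  - intros alpha Ha. apply is_derive2_LB, unit_interval_in_roots; assumption.
  - intros x y t Hx Hy. apply LB_strict_concave; [exact heps | |];
      apply unit_interval_in_roots; assumption.
Qed.
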